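(* If $S$ is an $\varepsilon$-synchronization string, then $\mathrm{RSD}(S[1,i],S[1,j])>1-\varepsilon$ for any $i<j$.
   Context: $\mathrm{ED}$ is the insertion/deletion edit distance. $S[i,j]$ denotes positions $i$ through $j$, $S[i,j)$ positions $i$ through $j-1$, $S(i,j]=S[i+1,j]$; for $i<1$, $S[i,j]=\bot^{-i+1}S[1,j]$ with $\bot\notin\Sigma$. $\mathrm{RSD}(S,S')=\max_{k>0}\frac{\mathrm{ED}(S(|S|-k,|S|],S'(|S'|-k,|S'|])}{2k}$. A string $S\in\Sigma^n$ is an $\varepsilon$-synchronization string ($0<\varepsilon<1$) if for every $1\le i<j<k\le n+1$, $\mathrm{ED}(S[i,j),S[j,k))>(1-\varepsilon)(k-i)$. *)

From HB Require Import structures.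
From mathcomp Require Import all_boot all_order all_algebra.
From mathcomp Require Import boolp classical_sets reals.
Set Implicit Arguments. Unset Strict Implicit. Unset Printing Implicit Defensive.
Import Order.TTheory GRing.Theory Num.Theory.

Section EditDistance.
Variable T : eqType.

Definition one_edit (x y : seq T) : Prop :=
  exists a b (c : T), (x = a ++ b /\ y = a ++ c :: b) \/ (x = a ++ c :: b /\ y = a ++ b).

Fixpoint reachn (n : nat) (x y : seq T) : Prop :=
  match n with
  | 0 => x = y
  | n'.+1 => exists z, one_edit x z /\ reachn n' z y
  end.

Lemma reachn_cat m n x y z : reachn m x y -> reachn n y z -> reachn (m + n) x z.
Proof.
elim: m x => [|m IH] x /=; first by move=> ->.
by move=> [w [hw hr]] hn; exists w; split=> //; apply: IH.
Qed.

Lemma reachn_del x : reachn (size x) x [::].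
Proof.
elim: x => [|c x IH] //=; exists x; split=> //.
by exists [::], x, c; right.
Qed.

Lemma reachn_ins y : reachn (size y) [::] y.
Proof.
elim/last_ind: y => [|y c IH] //=.
rewrite size_rcons -addn1; apply: (reachn_cat IH) => /=.
exists (rcons y c); split=> //.
by exists y, [::], c; left; rewrite cats0 cats1.
Qed.

Lemma ED_exists x y : exists n, `[< reachn n x y >].
Proof.
exists (size x + size y); apply/asboolP.
exact: reachn_cat (reachn_del x) (reachn_ins y).
Qed.

Definition ED (x y : seq T) : nat := ex_minn (ED_exists x y).
End EditDistance.

(* Strings are 1-indexed: S[i,j) = positions i..j-1. *)
Definition slice {T : Type} (S : seq T) (i j : nat) : seq T :=
  take (j - i) (drop (i - 1) S).

(* S(|S|-k, |S|] padded on the left with bottom (None) symbols when k > |S|. *)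
Definition padsuffix {T : Type} (k : nat) (S : seq T) : seq (option T) :=
  nseq (k - size S) None ++ map Some (drop (size S - k) S).

Section Sync.
Variable R : realType.
Local Open Scope ring_scope.
Local Open Scope classical_set_scope.

Definition RSD {T : eqType} (S S' : seq T) : R :=
  sup [set ((ED (padsuffix k S) (padsuffix k S'))%:R / (2 * k%:R) : R)
      | k in [set k : nat | (0 < k)%N]].

Definition sync_string {T : eqType} (eps : R) (S : seq T) : Prop :=
  0 < eps < 1 /\
  forall i j k : nat, (1 <= i)%N -> (i < j)%N -> (j < k)%N -> (k <= size S + 1)%N ->
    (1 - eps) * (k - i)%:R < (ED (slice S i j) (slice S j k))%:R.
End Sync.

(* Take k = j - i.  The length-k suffix of S[1,j] is S(i,j], and that of S[1,i]
   is S(i-k,i] padded with k-i symbols bot (none when k <= i).  Since bot never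
   occurs in S(i,j], every edit script must delete the padding, so the edit
   distance is at least ED(S(i-k,i], S(i,j]) + (k - i), and the synchronization
   property on the triple (i-k+1, i+1, j+1) bounds this from below by
   (1 - eps) 2k strictly.  Dividing by 2k gives a term of the supremum RSD. *)

From HB Require Import structures.
From mathcomp Require Import all_boot all_order all_algebra.
From mathcomp Require Import boolp classical_sets reals.
From mathcomp Require Import zify lra.
Import Order.TTheory GRing.Theory Num.Theory.

Set Implicit Arguments.
Unset Strict Implicit.
Unset Printing Implicit Defensive.

Section EditDistanceFacts.
Variable T : eqType.

Lemma ED_spec (x y : seq T) : reachn (ED x y) x y.
Proof. by rewrite /ED; case: ex_minnP => n /asboolP. Qed.

Lemma ED_min n (x y : seq T) : reachn n x y -> (ED x y <= n)%N.
Proof. by move=> xy; rewrite /ED; case: ex_minnP => m _; apply; apply/asboolP. Qed.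

Lemma ED_le_size (x y : seq T) : (ED x y <= size x + size y)%N.
Proof. exact/ED_min/(reachn_cat (reachn_del x) (reachn_ins y)). Qed.

End EditDistanceFacts.

Section BotErasure.
Variable T : eqType.

Definition count_bot (a : seq (option T)) : nat := count_mem None a.

Lemma one_edit_pmap (a z : seq (option T)) : one_edit a z ->
  (pmap id a = pmap id z /\ (count_bot a <= (count_bot z).+1)%N)
  \/ (one_edit (pmap id a) (pmap id z) /\ count_bot a = count_bot z).
Proof.
move=> [p [q [c [[-> ->]|[-> ->]]]]]; rewrite /count_bot !pmap_cat !count_cat /=;
  case: c => [c|] /=.
- by right; split=> //; exists (pmap id p), (pmap id q), c; left.
- by left; split=> //; lia.
- by right; split=> //; exists (pmap id p), (pmap id q), c; right.
- by left; split=> //; lia.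
Qed.

Lemma reachn_pmap n (a b : seq (option T)) : reachn n a b ->
  exists m, reachn m (pmap id a) (pmap id b)
            /\ (m + (count_bot a - count_bot b) <= n)%N.
Proof.
elim: n a => [|n IH] a /=; first by move=> ->; exists 0%N; rewrite subnn.
move=> [z [az zb]]; have [m [hm le_m]] := IH _ zb.
case: (one_edit_pmap az) => [[-> le_az]|[az' eq_az]].
- by exists m; split=> //; lia.
- by exists m.+1; split; [exists (pmap id z) | rewrite eq_az; lia].
Qed.

(* Each surplus bot symbol of [a] has to be deleted. *)
Lemma ED_pmap (a b : seq (option T)) :
  (ED (pmap id a) (pmap id b) + (count_bot a - count_bot b) <= ED a b)%N.
Proof.
have [m [hm le_m]] := reachn_pmap (ED_spec a b).
by apply: leq_trans le_m; rewrite leq_add2r ED_min.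
Qed.

End BotErasure.

Section Padding.
Variable T : eqType.
Implicit Types s : seq T.

Lemma size_padsuffix k s : size (padsuffix k s) = k.
Proof. by rewrite /padsuffix size_cat size_nseq size_map size_drop; lia. Qed.

Lemma pmap_padsuffix k s : pmap id (padsuffix k s) = drop (size s - k) s.
Proof.
rewrite /padsuffix pmap_cat; elim: (k - size s)%N => [|n IH] /=; last exact: IH.
by elim: (drop _ s) => //= x t ->.
Qed.

Lemma count_bot_padsuffix k s : count_bot (padsuffix k s) = (k - size s)%N.
Proof.
rewrite /count_bot /padsuffix count_cat count_nseq /= mul1n count_map.
by rewrite (eq_count (a2 := pred0)) // count_pred0 addn0.
Qed.

Lemma drop_take_slice m n s : (m <= n)%N -> drop m (take n s) = slice s m.+1 n.+1.
Proof. by move=> le_mn; rewrite /slice subSS subn1 take_drop subnK. Qed.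

End Padding.

Section RSDLowerBound.
Variable R : realType.
Local Open Scope ring_scope.

Lemma ED_padsuffix_le_RSD (T : eqType) (S S' : seq T) k : (0 < k)%N ->
  (ED (padsuffix k S) (padsuffix k S'))%:R / (2 * k%:R) <= RSD R S S'.
Proof.
move=> k_gt0; apply: ub_le_sup; last by exists k.
exists 1 => _ [k' /= k'_gt0 <-].
rewrite ler_pdivrMr ?mulr_gt0 ?ltr0n // mul1r -natrM ler_nat mul2n -addnn.
by have := ED_le_size (padsuffix k' S) (padsuffix k' S'); rewrite !size_padsuffix.
Qed.

End RSDLowerBound.

Local Open Scope ring_scope.

Theorem lemma16 (R : realType) (Sigma : eqType) (eps : R) (S : seq Sigma) :
  sync_string eps S ->
  forall i j : nat, (1 <= i)%N -> (i < j)%N -> (j <= size S)%N ->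
    1 - eps < RSD R (take i S) (take j S).
Proof.
move=> [/andP[eps_gt0 _] sync] i j i_ge1 lt_ij le_jS.
have [k k_def] : {k | k = j - i}%N by exists (j - i)%N.
have k_gt0 : (0 < k)%N by lia.
set a := padsuffix k (take i S); set b := padsuffix k (take j S).
have ED_ab : (ED (slice S (i - k).+1 i.+1) (slice S i.+1 j.+1) + (k - i) <= ED a b)%N.
  have := ED_pmap a b; rewrite !pmap_padsuffix !count_bot_padsuffix.
  rewrite !size_takel; try lia.
  have [-> ->] : (j - k = i /\ k - j = 0)%N by lia.
  by rewrite subn0 -!drop_take_slice ?leq_subr // ltnW.
have := sync (i - k).+1 i.+1 j.+1 isT ltac:(lia) ltac:(lia) ltac:(lia).
rewrite subSS => sync_ik.
have ED_ab_gt : (1 - eps) * (2 * k)%N%:R < (ED a b)%:R.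
  rewrite (_ : 2 * k = j - (i - k) + (k - i))%N; last by lia.
  move: ED_ab; rewrite -(ler_nat R) !natrD; have := ler0n R (k - i); nra.
apply: lt_le_trans (ED_padsuffix_le_RSD R _ _ k_gt0).
by rewrite ltr_pdivlMr ?mulr_gt0 ?ltr0n // -natrM.
Qed.
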